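(* Let $\psi$ be a DoR fairness property, let $l,u$ be welfare bounds with $u-l\le\kappa$, and let $\pi$ be a Static-BW shield (with period $T$ and welfare bounds $l,u$). Let $\tau=\tau_1\cdots\tau_m\in\mathtt{FT}^{mT}_{\theta,\pi}$ with $|\tau_i|=T$ for each $i\le m$. If every $\tau_i$ is $N$-balanced w.r.t. $\mathtt{den}^a$ and $\mathtt{den}^b$ for $N=\lceil 1/(u-l)\rceil$, then $\psi(\tau)\le\kappa$.
   Context: Input space $\mathcal{X}=\{a,b\}\times\{0,1\}\times\mathbb{C}$ ($\mathbb{C}\subset\mathbb{R}_{\ge0}$ finite; $x=(g,r,c)$ = group, recommendation, cost), output space $\mathcal{Y}=\{0,1\}$, input distribution $\theta$, threshold $\kappa$. Shields $\pi:(\mathcal{X}\times\mathcal{Y})^*\times\mathcal{X}\to\mathcal{Y}$, set $\Pi$. $\mathtt{FT}^t_{\theta,\pi}$: traces of length $t$ with $\theta(x_i)>0$ and $y_i=\pi(\text{prefix},x_i)$. $\mathit{cost}(\tau)=\sum c_i\mathbb{1}[r_i\neq y_i]$; $\mathbb{E}[\mathit{cost};\theta,\pi,T]=\sum_{\tau\in(\mathcal{X}\times\mathcal{Y})^T}\mathit{cost}(\tau)\prod\theta(x_i)\mathbb{1}[\tau\in\mathtt{FT}^T_{\theta,\pi}]$. DoR: $\mathtt{WF}^g=\mathtt{num}^g/\mathtt{den}^g$ with $\mathtt{num}^g,\mathtt{den}^g$ additive single-counter statistics (traces $\to\mathbb{N}$, $\mu(\tau\tau')=\mu(\tau)+\mu(\tau')$),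 $\psi=|\mathtt{WF}^a-\mathtt{WF}^b|$. A length-$T$ trace is $N$-balanced w.r.t. $\mathtt{den}^a,\mathtt{den}^b$ if both are $\ge N$; $\mathtt{BT}^T_N$ is the set of such traces. $\Pi_{\mathtt{BW}}^{\theta,T,N}=\{\pi\in\Pi:\forall\tau\in\mathtt{FT}^T_{\theta,\pi}\cap\mathtt{BT}^T_N,\ \forall g,\ l\le\mathtt{WF}^g(\tau)\le u\}$. A Static-BW shield is the concatenation of infinitely many copies of $\pi^*\in\arg\min_{\pi\in\Pi_{\mathtt{BW}}^{\theta,T,N}}\mathbb{E}[\mathit{cost};\theta,\pi,T]$ with $N=\lceil 1/(u-l)\rceil$, where the concatenation of $\pi_1,\pi_2,\dots$ is the shield $\pi$ with $\pi(\tau\tau',x)=\pi_{j+1}(\tau',x)$ whenever $|\tau|=jT$, $|\tau'|<T$. *)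

From HB Require Import structures.
From mathcomp Require Import all_boot all_order all_algebra.
From mathcomp Require Import finmap.
From mathcomp Require Import reals.
Set Implicit Arguments. Unset Strict Implicit. Unset Printing Implicit Defensive.
Import Order.TTheory GRing.Theory Num.Theory.
Local Open Scope ring_scope.

Section Defs.
Variable R : realType.
Variable C : {fset R}.

Definition grp := bool.
Definition ga : grp := true.
Definition gb : grp := false.

Definition X : finType := (grp * bool * C)%type.
Definition Y := bool.
Definition trace := seq (X * Y).
Definition shield := trace -> X -> Y.

Definition xgroup (x : X) : grp := x.1.1.
Definition xrec (x : X) : bool := x.1.2.
Definition xcost (x : X) : R := val x.2.

Fixpoint feasible_from (theta : X -> R) (pi : shield) (pre tau : trace) : bool :=
  match tau with
  | [::] => true
  | e :: t => [&& 0 < theta e.1, e.2 == pi pre e.1 & feasible_from theta pi (rcons pre e) t]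
  end.

Definition FT (t : nat) (theta : X -> R) (pi : shield) (tau : trace) : bool :=
  (size tau == t) && feasible_from theta pi [::] tau.

Definition cost (tau : trace) : R :=
  \sum_(e <- tau) xcost e.1 * (xrec e.1 != e.2)%:R.

Definition expected_cost (theta : X -> R) (pi : shield) (T : nat) : R :=
  \sum_(tau : T.-tuple (X * Y))
     cost tau * (\prod_(e <- tau) theta e.1) * (FT T theta pi tau)%:R.

Definition additive_stat (mu : trace -> nat) : Prop :=
  forall t t' : trace, mu (t ++ t') = (mu t + mu t')%N.

Definition WF (num den : grp -> trace -> nat) (g : grp) (tau : trace) : R :=
  (num g tau)%:R / (den g tau)%:R.

Definition psi (num den : grp -> trace -> nat) (tau : trace) : R :=
  `|WF num den ga tau - WF num den gb tau|.

Definition balanced (den : grp -> trace -> nat) (N : int) (tau : trace) : bool :=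
  (N <= (den ga tau)%:Z) && (N <= (den gb tau)%:Z).

Definition in_Pi_BW (theta : X -> R) (T : nat) (N : int)
    (num den : grp -> trace -> nat) (l u : R) (pi : shield) : Prop :=
  forall tau : trace, FT T theta pi tau -> balanced den N tau ->
    forall g : grp, l <= WF num den g tau <= u.

Definition N_of (l u : R) : int := Num.ceil (1 / (u - l)).

(* concatenation of infinitely many copies of pistar with period T *)
Definition concat_shield (pistar : shield) (T : nat) : shield :=
  fun h x => pistar (drop (T * (size h %/ T)) h) x.

Definition static_BW (theta : X -> R) (T : nat) (num den : grp -> trace -> nat)
    (l u : R) (pi : shield) : Prop :=
  exists pistar : shield,
    [/\ in_Pi_BW theta T (N_of l u) num den l u pistar,
        (forall pi' : shield, in_Pi_BW theta T (N_of l u) num den l u pi' ->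
           expected_cost theta pistar T <= expected_cost theta pi' T)
      & (forall h x, pi h x = concat_shield pistar T h x)].

End Defs.

From HB Require Import structures.
From mathcomp Require Import all_boot all_order all_algebra.
From mathcomp Require Import finmap.
From mathcomp Require Import reals.
From mathcomp Require Import lra.

Set Implicit Arguments.
Unset Strict Implicit.
Unset Printing Implicit Defensive.
Import Order.TTheory GRing.Theory Num.Theory.
Local Open Scope ring_scope.

(* The concatenated shield restarts at every multiple of T, so each block
   tau_i is a feasible run of the base shield pi*; being N-balanced (with
   N >= 1), it has positive denominators and welfare in [l, u] for both
   groups.  Numerators and denominators are additive, so WF^g(tau) is a
   mediant of the block welfares and stays in [l, u]; hence
   psi(tau) <= u - l <= kappa. *)

Lemma dist_le_width (F : realDomainType) (l u x y : F) :
  l <= x <= u -> l <= y <= u -> `|x - y| <= u - l.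
Proof. by move=> /andP[? ?] /andP[? ?]; rewrite ler_norml; apply/andP; split; lra. Qed.

Lemma mediant_within (F : realFieldType) (I : eqType) (s : seq I)
    (a b : I -> F) (l u : F) :
  s != [::] -> (forall i, i \in s -> 0 < b i /\ l <= a i / b i <= u) ->
  l <= (\sum_(i <- s) a i) / (\sum_(i <- s) b i) <= u.
Proof.
case: s => [|i0 s] // _ within.
have ratio_within x y : 0 < y -> (l <= x / y <= u) = (l * y <= x <= u * y).
  by move=> y_gt0; rewrite ler_pdivlMr // ler_pdivrMr.
have sum_b_gt0 : 0 < \sum_(i <- i0 :: s) b i.
  rewrite big_cons ltr_pwDl ?(within i0 (mem_head _ _)).1 //.
  by rewrite big_seq sumr_ge0 // => i i_s; rewrite ltW // (within i _).1 // inE i_s orbT.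
rewrite ratio_within // !mulr_sumr !big_seq.
by apply/andP; split; apply: ler_sum => i /within[b_gt0];
  rewrite ratio_within // => /andP[].
Qed.

Lemma additive_stat_nil {T : Type} {mu : seq T -> nat} :
  (forall t t', mu (t ++ t') = (mu t + mu t')%N) -> mu [::] = 0%N.
Proof. by move=> mu_add; apply/eqP; rewrite -(eqn_add2l (mu [::])) addn0 -mu_add. Qed.

Lemma additive_stat_flatten {T : Type} {mu : seq T -> nat} :
  (forall t t', mu (t ++ t') = (mu t + mu t')%N) ->
  forall s, mu (flatten s) = (\sum_(t <- s) mu t)%N.
Proof.
move=> mu_add; elim=> [|t s IHs] /=; first by rewrite big_nil (additive_stat_nil mu_add).
by rewrite mu_add IHs big_cons.
Qed.

Section Traces.

Variables (R : realType) (C : {fset R}) (theta : X C -> R).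

Lemma feasible_from_cat (pi : shield C) (pre s t : trace C) :
  feasible_from theta pi pre (s ++ t) =
  feasible_from theta pi pre s && feasible_from theta pi (pre ++ s) t.
Proof.
elim: s pre => [|e s IHs] pre /=; first by rewrite cats0.
by rewrite IHs -cat_rcons !andbA.
Qed.

Variables (pistar pi : shield C) (T : nat).
Hypothesis pi_concat : forall h x, pi h x = concat_shield pistar T h x.

Lemma feasible_concat_shield_block (pre s t : trace C) :
  (T %| size pre)%N -> (size s + size t <= T)%N ->
  feasible_from theta pi (pre ++ s) t = feasible_from theta pistar s t.
Proof.
move=> T_pre; elim: t s => [|e t IHt] s //= st_le_T.
have s_lt_T : (size s < T)%N by apply: leq_trans st_le_T; rewrite addnS ltnS leq_addr.
rewrite pi_concat /concat_shield size_cat divnDl // (divn_small s_lt_T) addn0.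
rewrite mulnC divnK // drop_size_cat // rcons_cat IHt //.
by rewrite size_rcons addSn -addnS.
Qed.

Lemma feasible_concat_shield_blocks (taus : seq (trace C)) (pre : trace C) :
  (forall t, t \in taus -> size t = T) -> (T %| size pre)%N ->
  feasible_from theta pi pre (flatten taus) ->
  forall t, t \in taus -> feasible_from theta pistar [::] t.
Proof.
elim: taus pre => [|t0 ts IHts] pre //= sizeT T_pre.
rewrite feasible_from_cat => /andP[feas_t0 feas_ts] t.
rewrite inE => /predU1P[->|t_ts].
  rewrite -(feasible_concat_shield_block (s := [::]) T_pre) ?cats0 //.
  by rewrite add0n sizeT ?mem_head.
apply: (IHts (pre ++ t0)) => //.
  by move=> t' t'_ts; rewrite sizeT // inE t'_ts orbT.
by rewrite size_cat (sizeT t0) ?mem_head // dvdn_addr.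
Qed.

End Traces.

Section Welfare.

Variables (R : realType) (C : {fset R}) (num den : grp -> trace C -> nat).
Hypotheses (num_add : forall g, additive_stat (num g))
           (den_add : forall g, additive_stat (den g)).

Lemma psi_nil : psi num den [::] = 0.
Proof.
rewrite /psi /WF (additive_stat_nil (num_add ga)) (additive_stat_nil (num_add gb)).
by rewrite !mul0r subrr normr0.
Qed.

Lemma WF_flatten_within (g : grp) (l u : R) (taus : seq (trace C)) :
  taus != [::] ->
  (forall t, t \in taus -> (0 < den g t)%N /\ l <= WF num den g t <= u) ->
  l <= WF num den g (flatten taus) <= u.
Proof.
move=> taus_n0 within; rewrite /WF (additive_stat_flatten (num_add g)).
rewrite (additive_stat_flatten (den_add g)) !natr_sum.
by apply: mediant_within => // t /within[den_gt0]; rewrite ltr0n den_gt0.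
Qed.

End Welfare.

Lemma N_of_gt0 (R : realType) (l u : R) : l < u -> 0 < N_of l u.
Proof. by move=> lu; rewrite /N_of ceil_gt0 divr_gt0 // subr_gt0. Qed.

Lemma balanced_den_gt0 (R : realType) (C : {fset R}) (den : grp -> trace C -> nat)
    (N : int) (t : trace C) (g : grp) :
  0 < N -> balanced den N t -> (0 < den g t)%N.
Proof.
move=> N_gt0 /andP[Na Nb]; rewrite -(ltz_nat 0).
by case: g; apply: lt_le_trans N_gt0 _.
Qed.

Theorem theorem6p3 (R : realType) (C : {fset R})
  (hC : forall c : R, c \in C -> 0 <= c)
  (theta : X C -> R)
  (theta_ge0 : forall x, 0 <= theta x)
  (theta_sum1 : \sum_(x : X C) theta x = 1)
  (kappa : R)
  (num den : grp -> trace C -> nat)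
  (num_add : forall g, additive_stat (num g))
  (den_add : forall g, additive_stat (den g))
  (l u : R) (hlu : l < u) (hkappa : u - l <= kappa)
  (T : nat) (pi : shield C)
  (hpi : static_BW theta T num den l u pi)
  (m : nat) (taus : seq (trace C))
  (hm : size taus = m)
  (hsize : forall t, t \in taus -> size t = T)
  (hFT : FT (m * T) theta pi (flatten taus))
  (hbal : forall t, t \in taus -> balanced den (N_of l u) t) :
  psi num den (flatten taus) <= kappa.
Proof.
case: hpi => pistar [pistar_BW _ pi_concat].
have feas := feasible_concat_shield_blocks (pre := [::]) pi_concat hsize (dvdn0 T).
case/andP: hFT => _ /feas {}feas.
have blocks_within g t : t \in taus -> (0 < den g t)%N /\ l <= WF num den g t <= u.
  move=> t_taus; have bal_t := hbal t t_taus.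
  split; first exact: balanced_den_gt0 (N_of_gt0 hlu) bal_t.
  by apply: pistar_BW bal_t g; rewrite /FT hsize // eqxx feas.
apply: le_trans hkappa.
have [->|taus_n0] := eqVneq taus [::].
  by rewrite (psi_nil den num_add) subr_ge0 ltW.
have WF_within g := WF_flatten_within num_add den_add taus_n0 (blocks_within g).
exact: dist_le_width (WF_within ga) (WF_within gb).
Qed.
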